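(* Let $L$ be a finite-dimensional pure, nonnilpotent, solvable Lie algebra over $\mathbb{C}$ of breadth $2$ such that $\dim[L,L]=2$ and $\dim L^k=1$ for all integers $k\geq 2$. Then $\dim Z(L)=1$.
   Context: For $x\in L$, $b(x)=\mathrm{rank}(\mathrm{ad}_x)$ and the breadth of $L$ is $b(L)=\max\{b(x)\mid x\in L\}$. $L$ is pure if it has no abelian ideal as a direct summand; equivalently $Z(L)\subseteq[L,L]$, where $Z(L)$ is the center. The lower central series is indexed by $L^0=L$, $L^1=[L,L]$ and $L^k=[L,L^{k-1}]$ for $k\geq 2$. *)

From HB Require Import structures.
From mathcomp Require Import all_boot all_order all_algebra.
From mathcomp Require Import complex.
From mathcomp Require Import Rstruct.
Set Implicit Arguments. Unset Strict Implicit. Unset Printing Implicit Defensive.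
Import Order.TTheory GRing.Theory Num.Theory.
Local Open Scope ring_scope.

Definition CC : fieldType := (Rdefinitions.R)[i].

Section Lie.
Variables (F : fieldType) (L : vectType F) (br : L -> L -> L).

Definition is_lie_bracket : Prop :=
  [/\ (forall (a : F) (x y z : L), br (a *: x + y) z = a *: br x z + br y z),
      (forall (a : F) (x y z : L), br x (a *: y + z) = a *: br x y + br x z),
      (forall x : L, br x x = 0) &
      (forall x y z : L, br x (br y z) + br y (br z x) + br z (br x y) = 0)].

Definition ad (x : L) : 'End(L) := linfun (br x).

Definition brd (x : L) : nat := \dim (limg (ad x)).

Definition has_breadth (b : nat) : Prop :=
  (exists x, brd x = b) /\ (forall x, (brd x <= b)%N).

Definition brs (A B : {vspace L}) : {vspace L} :=
  <<[seq br a b | a <- vbasis A, b <- vbasis B]>>%VS.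

(* lower central series: L^0 = L, L^k = [L, L^(k-1)] *)
Fixpoint lcs (k : nat) : {vspace L} :=
  match k with 0 => fullv | k'.+1 => brs fullv (lcs k') end.

Fixpoint dser (k : nat) : {vspace L} :=
  match k with 0 => fullv | k'.+1 => brs (dser k') (dser k') end.

Definition center : {vspace L} := lker (linfun ad).

Definition nilpotent : Prop := exists k, lcs k = 0%VS.
Definition solvable : Prop := exists k, dser k = 0%VS.
Definition pure : Prop := (center <= brs fullv fullv)%VS.

End Lie.

From HB Require Import structures.
From mathcomp Require Import all_boot all_order all_algebra.
Set Implicit Arguments. Unset Strict Implicit. Unset Printing Implicit Defensive.
Import Order.TTheory GRing.Theory Num.Theory.
Local Open Scope ring_scope.

(* Since L^2 = <z> is one-dimensional, [u, z] = phi(u) z for a linear form phi, and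
   the Jacobi identity forces z to commute with [L, L] = <w> + <z>, so [L, L] is
   abelian. As L^3 = [L, z] is nonzero there is an x with [x, z] = c z, c <> 0;
   writing [x, w] = d z, the Jacobi identity for x, b, w (b arbitrary) shows that c w - d z is
   central. Hence 0 <> Z(L), and Z(L) <> [L, L] since otherwise [L, [L, L]] = 0;
   purity gives Z(L) <= [L, L], which is two-dimensional, so dim Z(L) = 1. *)

Lemma linfun_linearE (K : fieldType) (aT rT : vectType K) (f : aT -> rT) :
  (forall a x y, f (a *: x + y) = a *: f x + f y) -> linfun f =1 f.
Proof.
move=> f_lin.
exact: (lfunE (HB.pack f (GRing.isLinear.Build K aT rT *:%R f f_lin))).
Qed.

Lemma dimv1_line (K : fieldType) (vT : vectType K) (U : {vspace vT}) :
  \dim U = 1%N -> U = <[vpick U]>%VS /\ vpick U != 0.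
Proof.
move=> dU; have nz_pick : vpick U != 0 by rewrite vpick0 -dimv_eq0 dU.
split=> //; apply/eqP; rewrite eq_sym eqEdim -memvE memv_pick.
by rewrite dim_vline nz_pick dU.
Qed.

Lemma dimv2_line_complement (K : fieldType) (vT : vectType K) (V : {vspace vT}) z :
  z != 0 -> (<[z]> <= V)%VS -> \dim V = 2%N ->
  exists2 w, V = (<[w]> + <[z]>)%VS & w \notin <[z]>%VS.
Proof.
move=> z0 sZV dV; set D := (V :\: <[z]>)%VS.
have dD : \dim D = 1%N.
  by have := dimv_cap_compl V <[z]>; rewrite (capv_idPr sZV) dim_vline z0 dV => -[].
have [Dw w0] := dimv1_line dD.
exists (vpick D); first by rewrite -Dw -{1}(addv_diff_cap V <[z]>) (capv_idPr sZV).
apply: contra w0 => wZ; rewrite -memv0 -(capv_diff V <[z]>) memv_cap wZ andbT.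
exact: memv_pick.
Qed.

Lemma dimv_proper_sub2 (K : fieldType) (vT : vectType K) (U V : {vspace vT}) :
  (U <= V)%VS -> U != 0%VS -> U != V -> \dim V = 2%N -> \dim U = 1%N.
Proof.
move=> sUV U0 UV dV; have := ltn_leqif (dimv_leqif_eq sUV).
by rewrite UV dV; move: U0; rewrite -dimv_eq0; case: (\dim U) => [|[|]].
Qed.

Section LieBracket.
Variables (F : fieldType) (L : vectType F) (br : L -> L -> L).
Hypothesis br_lie : is_lie_bracket br.

Lemma brDl a x y z : br (a *: x + y) z = a *: br x z + br y z.
Proof. by case: br_lie. Qed.
Lemma brDr a x y z : br x (a *: y + z) = a *: br x y + br x z.
Proof. by case: br_lie. Qed.
Lemma brxx x : br x x = 0.
Proof. by case: br_lie. Qed.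
Lemma brJ x y z : br x (br y z) + br y (br z x) + br z (br x y) = 0.
Proof. by case: br_lie. Qed.

Definition adr (x : L) : 'End(L) := linfun (br^~ x).

Lemma adrE x y : adr x y = br y x.
Proof. by apply: linfun_linearE => *; rewrite brDl. Qed.
Lemma adE x y : ad br x y = br x y.
Proof. by apply: linfun_linearE => *; rewrite brDr. Qed.

Lemma brZr a x y : br x (a *: y) = a *: br x y.
Proof. by rewrite -!adE linearZ. Qed.
Lemma brNr x y : br x (- y) = - br x y.
Proof. by rewrite -!adE linearN. Qed.
Lemma brBr x y z : br x (y - z) = br x y - br x z.
Proof. by rewrite -!adE linearB. Qed.

Lemma brC x y : br x y = - br y x.
Proof.
have := brxx (x + y); rewrite -adrE linearD /= !adrE -!adE !linearD /= !adE.
by rewrite !brxx add0r addr0 => /eqP; rewrite addr_eq0 => /eqP.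
Qed.

Lemma mem_brs (A B : {vspace L}) a b : a \in A -> b \in B -> br a b \in brs br A B.
Proof.
move=> aA bB.
have : br a b \in (adr b @: <<vbasis A>>)%VS.
  by rewrite (span_basis (vbasisP A)) -adrE memv_img.
rewrite limg_span; apply/subvP/span_subvP.
move=> _ /mapP [v vA ->]; rewrite adrE.
have : br v b \in (ad br v @: <<vbasis B>>)%VS.
  by rewrite (span_basis (vbasisP B)) -adE memv_img.
rewrite limg_span; apply/subvP/span_subvP.
move=> _ /mapP [u uB ->]; rewrite adE.
by apply: memv_span; apply: allpairs_f.
Qed.

Lemma brs_sub (A B W : {vspace L}) :
  {in A & B, forall a b, br a b \in W} -> (brs br A B <= W)%VS.
Proof.
move=> brAB; apply/span_subvP => _ /allpairsP [[a b] [/= aA bB ->]].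
by apply: brAB; apply: vbasis_mem.
Qed.

Lemma brs_eq0 (A B : {vspace L}) :
  {in A & B, forall a b, br a b = 0} -> brs br A B = 0%VS.
Proof.
move=> brAB; apply/eqP; rewrite -subv0.
by apply: brs_sub => a b aA bB; rewrite brAB ?mem0v.
Qed.

Lemma brsSr (A B C : {vspace L}) : (B <= C)%VS -> (brs br A B <= brs br A C)%VS.
Proof. by move/subvP=> sBC; apply: brs_sub => a b aA bB; rewrite mem_brs ?sBC. Qed.

Lemma lcsS k : (lcs br k.+1 <= lcs br k)%VS.
Proof. by elim: k => [|k IHk]; [exact: subvf | exact: brsSr]. Qed.

Lemma centerP u : reflect (forall v, br u v = 0) (u \in center br).
Proof.
have ad_lin a x y : ad br (a *: x + y) = a *: ad br x + ad br y.
  by apply/lfunP => v; rewrite add_lfunE scale_lfunE !adE brDl.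
rewrite memv_ker (linfun_linearE ad_lin); apply: (iffP eqP) => [adu0 v|bru0].
  by rewrite -adE adu0 zero_lfunE.
by apply/lfunP => v; rewrite adE bru0 zero_lfunE.
Qed.

Lemma line_ideal_centralizes_derived z :
  (forall u, br u z \in <[z]>%VS) -> {in brs br fullv fullv, forall u, br z u = 0}.
Proof.
move=> z_ideal; suff sub_ker : (brs br fullv fullv <= lker (ad br z))%VS.
  by move=> u /(subvP sub_ker); rewrite memv_ker adE => /eqP.
apply: brs_sub => a b _ _.
rewrite memv_ker adE; have := brJ a b z.
have [[k brbz] [m braz]] := (vlineP _ _ (z_ideal b), vlineP _ _ (z_ideal a)).
rewrite brbz brZr braz (brC z a) braz brNr brZr brbz !scalerA mulrC addrN add0r.
by move=> ->.
Qed.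

Lemma span2_abelian w z :
  br w z = 0 -> {in (<[w]> + <[z]>)%VS &, forall u v, br u v = 0}.
Proof.
move=> brwz; have brzw : br z w = 0 by rewrite brC brwz oppr0.
have [sWw sWz] : (<[w]> + <[z]> <= lker (ad br w))%VS /\
                 (<[w]> + <[z]> <= lker (ad br z))%VS.
  by split; rewrite subv_add -!memvE !memv_ker !adE ?brxx ?brwz ?brzw eqxx.
move=> u v uW vW; rewrite -adrE; apply/eqP; rewrite -memv_ker.
move: u uW; apply/subvP; rewrite subv_add -!memvE !memv_ker !adrE.
by rewrite -!adE -!memv_ker (subvP sWw) ?(subvP sWz).
Qed.

Lemma exists_br_line_neq0 z : brs br fullv <[z]> != 0%VS -> exists x, br x z != 0.
Proof.
case: (eqVneq (adr z) 0) => [adrz0 | /lfunPn [x]]; last first.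
  by rewrite adrE zero_lfunE; exists x.
case/eqP; apply: brs_eq0 => a _ _ /vlineP [k ->].
by rewrite brZr -adrE adrz0 zero_lfunE scaler0.
Qed.

Lemma center_neq_derived : lcs br 2 != 0%VS -> center br != brs br fullv fullv.
Proof.
apply: contraNneq => ZL1; apply/eqP; rewrite /= -ZL1.
by apply: brs_eq0 => a b _ /centerP brb0; rewrite brC brb0 oppr0.
Qed.

Lemma mem_center_combination x z w c d :
  (forall u, br u z \in <[z]>%VS) -> (forall u, br u w \in <[z]>%VS) ->
  (forall u, br w (br x u) = 0) ->
  br x z = c *: z -> br x w = d *: z -> c *: w - d *: z \in center br.
Proof.
move=> z_ideal w_ideal brw_brx brxz brxw; apply/centerP => b.
have [[f brbz] [g brbw]] := (vlineP _ _ (z_ideal b), vlineP _ _ (w_ideal b)).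
have := brJ x b w.
rewrite brbw brZr brxz (brC w x) brxw brNr brZr brbz brw_brx addr0 !scalerA => jac.
by rewrite brC brBr !brZr brbw brbz !scalerA (mulrC c) jac oppr0.
Qed.

Lemma dim_center_eq1 :
  pure br -> \dim (brs br fullv fullv) = 2%N ->
  \dim (lcs br 2) = 1%N -> \dim (lcs br 3) = 1%N -> \dim (center br) = 1%N.
Proof.
set L1 := brs br fullv fullv => pureL dL1 dL2 dL3.
have [L2z z0] := dimv1_line dL2; set z := vpick _ in L2z z0.
have brL2 u v : v \in L1 -> br u v \in <[z]>%VS.
  by move=> vL1; rewrite -L2z mem_brs ?memvf.
have sZL1 : (<[z]> <= L1)%VS by rewrite -L2z; apply: lcsS.
have z_ideal u : br u z \in <[z]>%VS by rewrite brL2 // (subvP sZL1) ?memv_line.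
have [w L1wz wz] := dimv2_line_complement z0 sZL1 dL1.
have wL1 : w \in L1 by rewrite L1wz (subvP (addvSl _ _)) ?memv_line.
have L1_abelian : {in L1 &, forall u v, br u v = 0}.
  rewrite L1wz; apply: span2_abelian.
  by rewrite brC (line_ideal_centralizes_derived z_ideal) ?oppr0.
have [x brxz0] : exists x, br x z != 0.
  by apply: exists_br_line_neq0; rewrite -L2z -dimv_eq0 dL3.
have [c brxz] := vlineP _ _ (z_ideal x).
have c0 : c != 0 by apply: contraNneq brxz0 => c0; rewrite brxz c0 scale0r.
have [d brxw] := vlineP _ _ (brL2 x w wL1).
have eZ : c *: w - d *: z \in center br.
  apply: mem_center_combination brxz brxw => // u; first exact: brL2 _ _ wL1.
  by rewrite L1_abelian ?mem_brs ?memvf.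
have e0 : c *: w - d *: z != 0.
  apply: contra wz; rewrite subr_eq0 => /eqP cw_dz.
  by rewrite -(scalerK c0 w) cw_dz scalerA memvZ ?memv_line.
apply: dimv_proper_sub2 pureL _ _ dL1.
  by apply: contraNneq e0 => Z0; rewrite -memv0 -Z0.
by rewrite center_neq_derived // -dimv_eq0 dL2.
Qed.

End LieBracket.

Theorem lemma3p3 (L : vectType CC) (br : L -> L -> L) :
  is_lie_bracket br ->
  pure br -> ~ nilpotent br -> solvable br ->
  has_breadth br 2 ->
  \dim (brs br fullv fullv) = 2%N ->
  (forall k : nat, (2 <= k)%N -> \dim (lcs br k) = 1%N) ->
  \dim (center br) = 1%N.
Proof.
move=> br_lie pureL _ _ _ dL1 dlcs.
by apply: dim_center_eq1; rewrite ?dlcs.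
Qed.
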